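(* Let $\frac{1}{2}\leq \alpha <1$ and let $G$ be a graph with $n$ vertices, $m$ edges, maximum degree $\Delta$ and minimum degree $\delta$. If $1\leq k\leq n-1$, then $$S_k(A_{\alpha}(G))\leq \frac{2\alpha km}{n}+\sqrt{\frac{k(n-k)}{n}\left(2m(1-\alpha)^2+\frac{\alpha^2n}{4}(\Delta-\delta)^2\right)}.$$
   Context: All graphs are simple and undirected. $A_{\alpha}(G)=\alpha D(G)+(1-\alpha)A(G)$, where $A(G)$ is the adjacency matrix and $D(G)$ the diagonal degree matrix. For a real symmetric matrix $M$ with eigenvalues $\lambda_1(M)\geq\cdots\geq\lambda_n(M)$, $S_k(M)=\sum_{i=1}^k\lambda_i(M)$. *)

From HB Require Import structures.
From mathcomp Require Import all_boot all_order all_algebra.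
Set Implicit Arguments. Unset Strict Implicit. Unset Printing Implicit Defensive.
Import Order.TTheory GRing.Theory Num.Theory.
Local Open Scope ring_scope.

(* A simple undirected graph on vertex set 'I_n is a symmetric, irreflexive
   relation e : rel 'I_n (hypotheses stated in the theorem). *)

Definition deg (n : nat) (e : rel 'I_n) (i : 'I_n) : nat := #|[set j | e i j]|.

Definition nedges (n : nat) (e : rel 'I_n) : nat :=
  #|[set p : 'I_n * 'I_n | e p.1 p.2 && (p.1 < p.2)%N]|.

(* maximum and minimum degree (for n >= 1; all degrees are < n) *)
Definition maxdeg (n : nat) (e : rel 'I_n) : nat := \max_(i : 'I_n) deg e i.
Definition mindeg (n : nat) (e : rel 'I_n) : nat := \big[minn/n]_(i : 'I_n) deg e i.

Definition adjmx (R : nzRingType) (n : nat) (e : rel 'I_n) : 'M[R]_n :=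
  \matrix_(i, j) (e i j)%:R.

Definition degmx (R : nzRingType) (n : nat) (e : rel 'I_n) : 'M[R]_n :=
  diag_mx (\row_i (deg e i)%:R).

Definition Aalpha (R : comNzRingType) (n : nat) (e : rel 'I_n) (alpha : R) : 'M[R]_n :=
  alpha *: degmx R e + (1 - alpha) *: adjmx R e.

Definition sorted_spectrum (R : rcfType) (n : nat) (M : 'M[R]_n) (s : seq R) : Prop :=
  char_poly M = \prod_(x <- s) ('X - x%:P) /\ sorted (fun x y : R => y <= x) s.

Definition Sk (R : rcfType) (s : seq R) (k : nat) : R := \sum_(i < k) s`_i.

From HB Require Import structures.
From mathcomp Require Import all_boot all_order all_algebra ring lra zify.
Import Order.TTheory GRing.Theory Num.Theory.
Set Implicit Arguments.
Unset Strict Implicit.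
Unset Printing Implicit Defensive.
Local Open Scope ring_scope.

(* The eigenvalues x_1 >= ... >= x_n of A_alpha(G) have sum tr A_alpha = 2 alpha m
   and square sum tr A_alpha^2 = alpha^2 sum_i d_i^2 + 2m (1 - alpha)^2.  Any k of
   n reals whose sum is T and variance V := sum x_i^2 - T^2/n satisfy, by
   Cauchy-Schwarz on the two blocks of the centred values,
   x_1 + ... + x_k <= kT/n + sqrt(k(n-k)/n * V).  Finally Popoviciu's inequality
   bounds the spread of the degrees: sum d_i^2 - (2m)^2/n <= n/4 (Delta - delta)^2. *)

(* X^2 - A^2 = (X - A)(X + A): the characteristic polynomial of A determines that of A^2. *)
Lemma char_poly_mulmx_sqr (R : comNzRingType) n (A : 'M[R]_n) :
  char_poly (A *m A) \Po 'X^2 = (-1) ^+ n * (char_poly A * (char_poly A \Po - 'X)).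
Proof.
set Ac := map_mx polyC A.
have mx_sqr : map_mx (comp_poly 'X^2) (char_poly_mx (A *m A)) =
              char_poly_mx A *m ('X%:M + Ac).
  rewrite /char_poly_mx mulmxDr !mulmxBl mul_scalar_mx mul_mx_scalar.
  rewrite mul_scalar_mx -map_mxM.
  apply/matrixP => i j; rewrite !mxE.
  by case: (i == j); rewrite /= ?mulr1n ?mulr0n comp_polyB comp_polyC ?comp_polyX ?comp_poly0; ring.
have mx_opp : map_mx (comp_poly (- 'X)) (char_poly_mx A) = - ('X%:M + Ac).
  apply/matrixP => i j; rewrite !mxE.
  by case: (i == j); rewrite /= ?mulr1n ?mulr0n comp_polyB comp_polyC ?comp_polyX ?comp_poly0; ring.
rewrite /char_poly -det_map_mx mx_sqr det_mulmx -det_map_mx mx_opp.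
rewrite -(scaleN1r ('X%:M + Ac)) detZ [RHS]mulrCA mulrA.
by rewrite -mulrA (mulrA ((-1) ^+ n)) -exprMn mulrNN mulr1 expr1n mul1r.
Qed.

Lemma char_poly_mulmx_sqr_eq (R : comNzRingType) n (A B : 'M[R]_n) :
  char_poly A = char_poly B -> char_poly (A *m A) = char_poly (B *m B).
Proof.
move=> eqAB; apply/polyP => i.
have := congr1 (fun p : {poly R} => p`_(i * 2)) (char_poly_mulmx_sqr A).
by rewrite eqAB -(char_poly_mulmx_sqr B) /= !coef_comp_poly_Xn // dvdn_mull // mulnK.
Qed.

Lemma mxtrace_char_poly_eq (R : comNzRingType) n (A B : 'M[R]_n) :
  char_poly A = char_poly B -> \tr A = \tr B.
Proof.
case: n A B => [|n] A B eqAB; first by rewrite /mxtrace !big_ord0.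
by apply: oppr_inj; rewrite -!char_poly_trace // eqAB.
Qed.

Section SortedSpectrum.

Variables (R : rcfType) (n : nat) (M : 'M[R]_n) (s : seq R).
Hypothesis spec_s : sorted_spectrum M s.

Lemma size_sorted_spectrum : size s = n.
Proof.
case: spec_s => /(congr1 (fun p : {poly R} => size p)).
by rewrite size_char_poly size_prod_XsubC => -[].
Qed.

Lemma char_poly_sorted_spectrum :
  char_poly M = char_poly (diag_mx (\row_(i < n) s`_i)).
Proof.
case: spec_s => -> _; rewrite char_poly_trig ?diag_mx_is_trig //.
rewrite (big_nth 0) big_mkord size_sorted_spectrum.
by apply: eq_bigr => i _; rewrite !mxE eqxx mulr1n.
Qed.

Lemma mxtrace_sorted_spectrum : \tr M = \sum_(i < n) s`_i.
Proof.
rewrite (mxtrace_char_poly_eq char_poly_sorted_spectrum) mxtrace_diag.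
by apply: eq_bigr => i _; rewrite mxE.
Qed.

Lemma mxtrace_sqr_sorted_spectrum : \tr (M *m M) = \sum_(i < n) s`_i ^+ 2.
Proof.
rewrite (mxtrace_char_poly_eq (char_poly_mulmx_sqr_eq char_poly_sorted_spectrum)).
by rewrite mulmx_diag mxtrace_diag; apply: eq_bigr => i _; rewrite !mxE.
Qed.

End SortedSpectrum.

Lemma sqr_sum_le_nat (R : realFieldType) (y : nat -> R) m p :
  (\sum_(m <= i < p) y i) ^+ 2 <= (p - m)%:R * \sum_(m <= i < p) y i ^+ 2.
Proof.
have [mp|pm] := ltnP m p; last by rewrite !big_geq // expr0n mulr0.
set S := \sum_(m <= i < p) y i; set c : R := (p - m)%:R.
have c_gt0 : 0 < c by rewrite ltr0n subn_gt0.
have dev_sum : \sum_(m <= i < p) (c * y i - S) ^+ 2 =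
               c * (c * \sum_(m <= i < p) y i ^+ 2 - S ^+ 2).
  rewrite (eq_bigr (fun i => c ^+ 2 * y i ^+ 2 - (2 * c * S) * y i + S ^+ 2));
    last by move=> i _; ring.
  rewrite big_split /= sumrB -!mulr_sumr sumr_const_nat -/S -mulr_natr -/c; ring.
have : 0 <= \sum_(m <= i < p) (c * y i - S) ^+ 2 by apply: sumr_ge0 => i _; exact: sqr_ge0.
by rewrite dev_sum pmulr_rge0 // subr_ge0.
Qed.

Lemma sqr_partial_sum_centered_le (R : realFieldType) (y : nat -> R) k n :
  (k <= n)%N -> \sum_(0 <= i < n) y i = 0 ->
  n%:R * (\sum_(0 <= i < k) y i) ^+ 2 <= k%:R * (n - k)%:R * \sum_(0 <= i < n) y i ^+ 2.
Proof.
move=> le_kn sum0; rewrite !(big_cat_nat (leq0n k) le_kn) /= in sum0 *.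
set a := \sum_(0 <= i < k) y i in sum0 *.
set A1 := \sum_(0 <= i < k) y i ^+ 2; set A2 := \sum_(k <= i < n) y i ^+ 2.
have tail : \sum_(k <= i < n) y i = - a by apply: (addrI a); rewrite subrr.
have head_CS : a ^+ 2 <= k%:R * A1 by rewrite -[k]subn0; exact: sqr_sum_le_nat.
have tail_CS : a ^+ 2 <= (n - k)%:R * A2 by rewrite -sqrrN -tail; exact: sqr_sum_le_nat.
have -> : n%:R = (n - k)%:R + k%:R :> R by rewrite -natrD subnK.
have -> : k%:R * (n - k)%:R * (A1 + A2) = (n - k)%:R * (k%:R * A1) + k%:R * ((n - k)%:R * A2).
  by ring.
by rewrite mulrDl; apply: lerD; rewrite ler_wpM2l.
Qed.

Lemma partial_sum_le_mean_add_sqrt_var (R : rcfType) (x : nat -> R) k n :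
  (k <= n)%N -> (0 < n)%N ->
  \sum_(0 <= i < k) x i <= k%:R * (\sum_(0 <= i < n) x i) / n%:R +
    Num.sqrt (k%:R * (n - k)%:R / n%:R *
      (\sum_(0 <= i < n) x i ^+ 2 - (\sum_(0 <= i < n) x i) ^+ 2 / n%:R)).
Proof.
move=> le_kn n_gt0; set T := \sum_(0 <= i < n) x i; set Q := \sum_(0 <= i < n) x i ^+ 2.
have n_neq0 : n%:R != 0 :> R by rewrite pnatr_eq0 -lt0n.
pose y i := x i - T / n%:R.
have sum_y j : \sum_(0 <= i < j) y i = \sum_(0 <= i < j) x i - j%:R * T / n%:R.
  by rewrite /y sumrB sumr_const_nat subn0; ring.
have sum_y0 : \sum_(0 <= i < n) y i = 0 by rewrite sum_y mulrAC divff // mul1r subrr.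
have sum_y2 : \sum_(0 <= i < n) y i ^+ 2 = Q - T ^+ 2 / n%:R.
  rewrite (eq_bigr (fun i => x i ^+ 2 - (2 * T / n%:R) * x i + (T / n%:R) ^+ 2));
    last by move=> i _; rewrite /y; ring.
  rewrite big_split /= sumrB -!mulr_sumr sumr_const_nat subn0 -/T -/Q -mulr_natr.
  by field.
set a := \sum_(0 <= i < k) x i - k%:R * T / n%:R.
have a2_le : a ^+ 2 <= k%:R * (n - k)%:R / n%:R * (Q - T ^+ 2 / n%:R).
  have := sqr_partial_sum_centered_le le_kn sum_y0; rewrite sum_y sum_y2 -/a => na2_le.
  by rewrite mulrAC ler_pdivlMr ?ltr0n // mulrC.
have -> : \sum_(0 <= i < k) x i = k%:R * T / n%:R + a by rewrite /a addrC subrK.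
rewrite lerD2l (le_trans (ler_norm a)) // -sqrtr_sqr.
exact: ler_wsqrtr.
Qed.

Section Graph.

Variables (n : nat) (e : rel 'I_n).

Lemma deg_sum i : deg e i = (\sum_j e i j)%N.
Proof. by rewrite /deg -sum1_card big_mkcond /=; apply: eq_bigr => j _; rewrite inE. Qed.

Lemma mindeg_le_deg i : (mindeg e <= deg e i)%N.
Proof. by rewrite /mindeg -minEnat -leEnat bigmin_le. Qed.

Lemma deg_le_maxdeg i : (deg e i <= maxdeg e)%N.
Proof. exact: leq_bigmax. Qed.

Hypotheses (e_sym : symmetric e) (e_irr : irreflexive e).

Lemma handshake : (\sum_i deg e i)%N = (2 * nedges e)%N.
Proof.
have nedges_lt : nedges e = (\sum_i \sum_j (e i j && (i < j)%N))%N.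
  rewrite /nedges -sum1_card big_mkcond /= pair_bigA /=.
  by apply: eq_bigr => p _; rewrite inE.
have nedges_gt : nedges e = (\sum_i \sum_j (e i j && (j < i)%N))%N.
  rewrite nedges_lt exchange_big /=.
  by apply: eq_bigr => i _; apply: eq_bigr => j _; rewrite e_sym.
rewrite mul2n -addnn {1}nedges_lt nedges_gt -big_split /=.
apply: eq_bigr => i _; rewrite deg_sum -big_split /=; apply: eq_bigr => j _.
case: (boolP (e i j)) => //= eij.
have : i != j by apply: contraTneq eij => ->; rewrite e_irr.
by rewrite neq_ltn; case: ltngtP.
Qed.

Variables (R : comNzRingType) (alpha : R).

Lemma AalphaE i j :
  Aalpha e alpha i j = alpha * (deg e i)%:R *+ (i == j) + (1 - alpha) * (e i j)%:R.
Proof. by rewrite !mxE; case: (i == j); rewrite ?mulr1n ?mulr0n ?mulr0. Qed.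

Lemma mxtrace_Aalpha : \tr (Aalpha e alpha) = alpha * (2 * nedges e)%:R.
Proof.
rewrite -handshake natr_sum mulr_sumr; apply: eq_bigr => i _.
by rewrite AalphaE eqxx e_irr mulr1n mulr0 addr0.
Qed.

Lemma mxtrace_Aalpha_sqr :
  \tr (Aalpha e alpha *m Aalpha e alpha) =
  alpha ^+ 2 * \sum_i (deg e i)%:R ^+ 2 + (1 - alpha) ^+ 2 * (2 * nedges e)%:R.
Proof.
rewrite -handshake natr_sum !mulr_sumr -big_split /=; apply: eq_bigr => i _.
rewrite mxE [in X in _ = _ + X]deg_sum natr_sum mulr_sumr.
rewrite (bigD1 i) //= [in RHS](bigD1 i) //= addrA.
congr (_ + _); first by rewrite !AalphaE eqxx e_irr mulr1n !mulr0 !addr0; ring.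
apply: eq_bigr => j ij; rewrite !AalphaE eq_sym (negbTE ij) (e_sym j i) !mulr0n !add0r.
by case: (e i j); rewrite ?mulr0 ?mulr1 //=; ring.
Qed.

End Graph.

Lemma popoviciu (R : realFieldType) n (d : 'I_n -> R) lo hi : (0 < n)%N ->
  (forall i, lo <= d i <= hi) ->
  \sum_i d i ^+ 2 - (\sum_i d i) ^+ 2 / n%:R <= n%:R / 4 * (hi - lo) ^+ 2.
Proof.
move=> n_gt0 d_bounds; set S := \sum_i d i; set N : R := n%:R.
have N_gt0 : 0 < N by rewrite ltr0n.
have prod_ge0 : 0 <= \sum_i (hi - d i) * (d i - lo).
  apply: sumr_ge0 => i _; have /andP[lo_d d_hi] := d_bounds i.
  by apply: mulr_ge0; rewrite subr_ge0.
have prod_sum : \sum_i (hi - d i) * (d i - lo) = (hi + lo) * S - N * hi * lo - \sum_i d i ^+ 2.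
  rewrite (eq_bigr (fun i => (hi + lo) * d i - hi * lo - d i ^+ 2)); last by move=> i _; ring.
  by rewrite !sumrB -mulr_sumr sumr_const card_ord -/S -mulr_natl -/N; ring.
have sqr_ge0' : 0 <= (S - N * (hi + lo) / 2) ^+ 2 / N by rewrite divr_ge0 ?sqr_ge0 ?ltW.
have completed_sqr : N / 4 * (hi - lo) ^+ 2 - ((hi + lo) * S - N * hi * lo - S ^+ 2 / N) =
                     (S - N * (hi + lo) / 2) ^+ 2 / N by field; lra.
lra.
Qed.

Lemma Aalpha_trace_variance_le (R : realFieldType) n (e : rel 'I_n) (alpha : R) :
  symmetric e -> irreflexive e -> (0 < n)%N ->
  \tr (Aalpha e alpha *m Aalpha e alpha) - (\tr (Aalpha e alpha)) ^+ 2 / n%:R <=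
    2 * (nedges e)%:R * (1 - alpha) ^+ 2
    + alpha ^+ 2 * n%:R / 4 * ((maxdeg e)%:R - (mindeg e)%:R) ^+ 2.
Proof.
move=> e_sym e_irr n_gt0.
have n_neq0 : n%:R != 0 :> R by rewrite pnatr_eq0 -lt0n.
have deg_bounds i :
    ((mindeg e)%:R <= (deg e i)%:R :> R) && ((deg e i)%:R <= (maxdeg e)%:R :> R).
  by rewrite !ler_nat mindeg_le_deg deg_le_maxdeg.
have := ler_wpM2l (sqr_ge0 alpha) (popoviciu n_gt0 deg_bounds).
rewrite -natr_sum handshake // natrM [X in _ <= X]mulrA [X in _ <= X * _]mulrA => deg_var.
rewrite mxtrace_Aalpha_sqr // mxtrace_Aalpha // natrM.
set D := \sum_i _ in deg_var *; set m : R := (nedges e)%:R.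
have -> : alpha ^+ 2 * D + (1 - alpha) ^+ 2 * (2%:R * m) - (alpha * (2%:R * m)) ^+ 2 / n%:R
  = alpha ^+ 2 * (D - (2%:R * m) ^+ 2 / n%:R) + 2 * m * (1 - alpha) ^+ 2 by field.
by rewrite addrC lerD2l.
Qed.

Theorem corollary3p1 (R : rcfType) (n : nat) (e : rel 'I_n) (alpha : R)
    (k : nat) (s : seq R) :
  symmetric e -> irreflexive e ->
  1 / 2 <= alpha -> alpha < 1 ->
  (1 <= k)%N -> (k <= n - 1)%N ->
  sorted_spectrum (Aalpha e alpha) s ->
  Sk s k <=
    2 * alpha * k%:R * (nedges e)%:R / n%:R
    + Num.sqrt (k%:R * (n - k)%:R / n%:R *
        (2 * (nedges e)%:R * (1 - alpha) ^+ 2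
         + alpha ^+ 2 * n%:R / 4 * ((maxdeg e)%:R - (mindeg e)%:R) ^+ 2)).
Proof.
move=> e_sym e_irr _ _ k_gt0 k_le spec_s.
have n_gt0 : (0 < n)%N by lia.
have le_kn : (k <= n)%N by lia.
have mean_tr : k%:R * \tr (Aalpha e alpha) / n%:R = 2 * alpha * k%:R * (nedges e)%:R / n%:R.
  by rewrite mxtrace_Aalpha // natrM; ring.
have := partial_sum_le_mean_add_sqrt_var (fun i => s`_i) le_kn n_gt0.
rewrite !big_mkord -(mxtrace_sorted_spectrum spec_s) -(mxtrace_sqr_sorted_spectrum spec_s).
move/le_trans; apply; rewrite mean_tr lerD2l.
apply/ler_wsqrtr/ler_wpM2l; first by rewrite divr_ge0 ?mulr_ge0.
exact: Aalpha_trace_variance_le.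
Qed.
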